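(* Consider the following model of a Kater reversible pendulum. A rigid bar of length $L$ and mass $m_b$ carries two knife-edge pivots $c_1$ and $c_2$ placed symmetrically on the bar, with a linear coordinate along the bar having origin at $c_1$ and $c_2$ at $x=d>0$. A fixed disk of mass $m_f$ and radius $r_f$ is centred at $x_f$ with $(d-L)/2<x_f<0$, and a movable disk of mass $m_m$ and radius $r_m$ is centred at a variable position $x$. Let $m=m_b+m_f+m_m$, $K=\frac{\frac d2 m_b+x_f m_f}{m}$, and let $h_1=K+\frac{m_m}{m}x$, $h_2=d-h_1$ be the distances of the centre of mass from $c_1$ and $c_2$. Let \[ I_0''=\frac{r_f^2}{2}m_f+\frac{r_m^2}{2}m_m+\frac{L^2}{12}m_b,\qquad I_0'=I_0''+m_f(x_f-K)^2+m_b\left(\tfrac d2-K\right)^2+m_mK^2, \] and let $I_0=m_m\frac{m-m_m}{m}x^2-2m_mKx+I_0'$ be the moment of inertia about the centre of mass. The equivalent length for oscillation about $c_i$ is $l_i=\frac{I_0+mh_i^2}{mh_i}$, and a characteristic position is a position $x$ of the movable disk with $l_1=l_2$ (equivalently equal periods $T_i=2\pi\sqrt{l_i/g}$ of small oscillations about both pivots); the common value $l$ is the associated characteristic length. Then: (i) if the bar is sufficiently long, namely $\frac{m_f}{m_m}|d-2x_f|\le L$, the pendulum always admits the characteristic position \[ x_{0_1}=\frac d2+\frac{m_f}{2m_m}(d-2x_f), \] whose characteristic length \[ l(x_{0_1})=\frac d2+2\frac{I_0''}{md}+\frac{m_f(m_m+m_f)(d-2x_f)^2}{2m_m m d} \]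 does not in general coincide with the distance $d$ between the pivots; (ii) under the condition $m_md^2+4mdK-4mK^2-4I_0'\ge 0$, the pendulum admits two further characteristic positions \[ x_{0_{2,3}}=\frac d2\pm\frac12\sqrt{d^2+4\,\frac{mK^2-mdK+I_0'}{m_m}}, \] symmetric with respect to the midpoint $d/2$ between the pivots, whose common characteristic length is exactly $d$; (iii) the pendulum admits no further characteristic positions.
   Context: Small oscillations about pivot $c_i$ obey $\ddot\varphi+\frac{mgh_i}{I_i}\varphi=0$ with $I_i=I_0+mh_i^2$ (Huygens–Steiner), so the period is $T_i=2\pi\sqrt{I_i/(mgh_i)}$ and the equivalent (simple-pendulum) length is $l_i=I_i/(mh_i)$. *)

From HB Require Import structures.
From mathcomp Require Import all_boot all_order all_algebra.
Set Implicit Arguments. Unset Strict Implicit. Unset Printing Implicit Defensive.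
Import Order.TTheory GRing.Theory Num.Theory.
Local Open Scope ring_scope.

Section Kater.
Variable R : rcfType.
Variables (mb mf mm rf rm L d xf : R).

Definition mtot : R := mb + mf + mm.
Definition Kc : R := (d / 2 * mb + xf * mf) / mtot.
Definition h1 (x : R) : R := Kc + mm / mtot * x.
Definition h2 (x : R) : R := d - h1 x.
Definition I0'' : R := rf ^+ 2 / 2 * mf + rm ^+ 2 / 2 * mm + L ^+ 2 / 12 * mb.
Definition I0' : R :=
  I0'' + mf * (xf - Kc) ^+ 2 + mb * (d / 2 - Kc) ^+ 2 + mm * Kc ^+ 2.
Definition I0 (x : R) : R :=
  mm * (mtot - mm) / mtot * x ^+ 2 - 2 * mm * Kc * x + I0'.
Definition l1 (x : R) : R := (I0 x + mtot * h1 x ^+ 2) / (mtot * h1 x).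
Definition l2 (x : R) : R := (I0 x + mtot * h2 x ^+ 2) / (mtot * h2 x).
Definition characteristic (x : R) : Prop :=
  h1 x != 0 /\ h2 x != 0 /\ l1 x = l2 x.

Definition x01 : R := d / 2 + mf / (2 * mm) * (d - 2 * xf).
Definition disc : R := d ^+ 2 - 4 * ((mtot * Kc ^+ 2 - mtot * d * Kc + I0') / mm).
Definition x02 : R := d / 2 + Num.sqrt disc / 2.
Definition x03 : R := d / 2 - Num.sqrt disc / 2.
End Kater.

(* The equivalent lengths l_i = h_i + I0/(m h_i) differ by
   (h1 - h2)(m h1 h2 - I0)/(m h1 h2), so equal periods force either h1 = h2,
   i.e. the centre of mass lies midway between the pivots (x = x01), or
   I0 = m h1 h2.  Expanding, I0 - m h1 h2 = mm ((x - d/2)^2 - disc/4), so the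
   second case gives exactly the two positions x02, x03 symmetric about d/2,
   where l_i = h_i + h1 h2 / h_i = h1 + h2 = d.  The Huygens-Steiner
   decomposition of I0 shows I0 > 0, which keeps h1 and h2 away from 0 there. *)
From Pilot Require Import Defs.
From HB Require Import structures.
From mathcomp Require Import all_boot all_order all_algebra.
From mathcomp Require Import ring lra.
Import Order.TTheory GRing.Theory Num.Theory.
Local Open Scope ring_scope.

Lemma sqrf_eq_sqrtr (R : rcfType) (y c : R) :
  0 <= c -> (y ^+ 2 == c) = (y == Num.sqrt c) || (y == - Num.sqrt c).
Proof. by move=> c_ge0; rewrite -{1}(sqr_sqrtr c_ge0) eqf_sqr. Qed.

Section KaterIdentities.
Set Implicit Arguments.
Unset Strict Implicit.

Variables (R : rcfType) (mb mf mm rf rm L d xf : R).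

Local Notation m := (mtot mb mf mm).
Local Notation h1 := (h1 mb mf mm d xf).
Local Notation h2 := (h2 mb mf mm d xf).
Local Notation I0'' := (I0'' mb mf mm rf rm L).
Local Notation I0 := (I0 mb mf mm rf rm L d xf).
Local Notation l1 := (l1 mb mf mm rf rm L d xf).
Local Notation l2 := (l2 mb mf mm rf rm L d xf).
Local Notation characteristic := (characteristic mb mf mm rf rm L d xf).
Local Notation x01 := (x01 mf mm d xf).
Local Notation disc := (disc mb mf mm rf rm L d xf).
Local Notation x02 := (x02 mb mf mm rf rm L d xf).
Local Notation x03 := (x03 mb mf mm rf rm L d xf).

Lemma x01_bounds : 0 <= mf / mm -> mf / mm * `|d - 2 * xf| <= L ->
  (d - L) / 2 <= x01 <= (d + L) / 2.
Proof.
move=> ratio_ge0; rewrite -(ger0_norm ratio_ge0) -normrM => /ler_normlP[lo hi].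
have -> : x01 = d / 2 + mf / mm * (d - 2 * xf) / 2 by rewrite /x01 invfM; ring.
set u := mf / mm * _ in lo hi *; apply/andP; split; lra.
Qed.

Hypotheses (mtot_neq0 : m != 0) (mm_neq0 : mm != 0).
Let msum_neq0 : mb + mf + mm != 0 := mtot_neq0.

Lemma I0E x : I0 x = I0'' + mf * (xf - h1 x) ^+ 2 + mb * (d / 2 - h1 x) ^+ 2
                          + mm * (x - h1 x) ^+ 2.
Proof. by rewrite /Defs.I0 /I0' /Defs.h1 /Kc /mtot; field. Qed.

Lemma h1_x01 : h1 x01 = d / 2.
Proof. by rewrite /Defs.h1 /x01 /Kc /mtot; field; rewrite mm_neq0 msum_neq0. Qed.

Lemma h2_x01 : h2 x01 = d / 2.
Proof. by rewrite /Defs.h2 h1_x01; field. Qed.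

Lemma h1_sub_h2 x : h1 x - h2 x = 2 * mm / m * (x - x01).
Proof.
by rewrite /Defs.h2 /Defs.h1 /x01 /Kc /mtot; field; rewrite mm_neq0 msum_neq0.
Qed.

Lemma I0_sub_mh1h2 x : I0 x - m * h1 x * h2 x = mm / 4 * ((2 * x - d) ^+ 2 - disc).
Proof.
rewrite /Defs.I0 /Defs.h2 /Defs.h1 /Defs.disc /I0' /Kc /mtot.
by field; rewrite mm_neq0 msum_neq0.
Qed.

Lemma l1_sub_l2 x : h1 x != 0 -> h2 x != 0 ->
  l1 x - l2 x = (h1 x - h2 x) * (m * h1 x * h2 x - I0 x) / (m * h1 x * h2 x).
Proof. by move=> ? ?; rewrite /Defs.l1 /Defs.l2; field; apply/and3P. Qed.

Lemma characteristic_cond_disc :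
  mm * d ^+ 2 + 4 * m * d * Kc mb mf mm d xf - 4 * m * Kc mb mf mm d xf ^+ 2
    - 4 * I0' mb mf mm rf rm L d xf = mm * disc.
Proof. by rewrite /disc; field. Qed.

Lemma sqr_2x_sub_d_eq_disc x : 0 <= disc ->
  ((2 * x - d) ^+ 2 == disc) = (x == x02) || (x == x03).
Proof.
move=> disc_ge0; rewrite sqrf_eq_sqrtr // /x02 /x03.
by congr (_ || _); apply/eqP/eqP => ?; lra.
Qed.

Lemma x02_root : 0 <= disc -> (2 * x02 - d) ^+ 2 = disc.
Proof. by move=> disc_ge0; apply/eqP; rewrite sqr_2x_sub_d_eq_disc ?eqxx. Qed.

Lemma x03_root : 0 <= disc -> (2 * x03 - d) ^+ 2 = disc.
Proof. by move=> disc_ge0; apply/eqP; rewrite sqr_2x_sub_d_eq_disc ?eqxx ?orbT. Qed.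

Lemma l1_x01 : d != 0 ->
  l1 x01 = d / 2 + 2 * I0'' / (m * d)
           + mf * (mm + mf) * (d - 2 * xf) ^+ 2 / (2 * mm * m * d).
Proof.
move=> d_neq0; rewrite /Defs.l1 I0E h1_x01 /x01 /mtot.
by field; rewrite mm_neq0 msum_neq0 d_neq0.
Qed.

Lemma characteristic_x01 : d != 0 -> characteristic x01.
Proof.
move=> d_neq0; have half_neq0 : d / 2 != 0 by rewrite mulf_neq0 // invr_eq0 pnatr_eq0.
by rewrite /Defs.characteristic /Defs.l1 /Defs.l2 h1_x01 h2_x01 half_neq0.
Qed.

Lemma characteristic_cases x : characteristic x ->
  x = x01 \/ (2 * x - d) ^+ 2 = disc.
Proof.
case=> h1_neq0 [h2_neq0 /eqP]; rewrite -subr_eq0 l1_sub_l2 //.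
rewrite !mulf_eq0 invr_eq0 !mulf_eq0 (negbTE mtot_neq0) (negbTE h1_neq0).
rewrite (negbTE h2_neq0) /= orbF => /orP[|].
  rewrite h1_sub_h2 !mulf_eq0 invr_eq0 (negbTE mtot_neq0) (negbTE mm_neq0).
  by rewrite pnatr_eq0 subr_eq0 /= => /eqP; left.
rewrite subr_eq0 eq_sym -subr_eq0 I0_sub_mh1h2 !mulf_eq0 invr_eq0 pnatr_eq0.
by rewrite (negbTE mm_neq0) subr_eq0 /= => /eqP; right.
Qed.

Lemma characteristic_root x : 0 < I0 x -> (2 * x - d) ^+ 2 = disc ->
  characteristic x /\ l1 x = d.
Proof.
move=> I0_gt0 root; have I0_eq : I0 x = m * h1 x * h2 x.
  by apply/eqP; rewrite -subr_eq0 I0_sub_mh1h2 root subrr mulr0.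
have h1_neq0 : h1 x != 0.
  by apply: contraTneq I0_gt0 => h0; rewrite I0_eq h0 mulr0 mul0r ltxx.
have h2_neq0 : h2 x != 0.
  by apply: contraTneq I0_gt0 => h0; rewrite I0_eq h0 mulr0 ltxx.
have l1_eq_l2 : l1 x = l2 x.
  by apply/eqP; rewrite -subr_eq0 l1_sub_l2 // I0_eq subrr mulr0 mul0r.
split; first by split; [|split].
by rewrite /Defs.l1 I0_eq /Defs.h2; field; rewrite mtot_neq0 h1_neq0.
Qed.

End KaterIdentities.

Lemma I0_gt0 (R : rcfType) (mb mf mm rf rm L d xf x : R) :
  0 <= mb -> 0 < mf -> 0 <= mm -> 0 < rf -> 0 < I0 mb mf mm rf rm L d xf x.
Proof.
move=> mb_ge0 mf_gt0 mm_ge0 rf_gt0.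
have m_gt0 : 0 < mtot mb mf mm by rewrite /mtot; lra.
rewrite I0E ?lt0r_neq0 // /I0'' -!addrA ltr_pwDl ?mulr_gt0 ?invr_gt0 ?exprn_gt0 ?ltr0n //.
by rewrite !addr_ge0 //; apply: mulr_ge0; rewrite ?divr_ge0 ?sqr_ge0 ?ler0n ?(ltW mf_gt0).
Qed.

Theorem corollary2 (R : rcfType) (mb mf mm rf rm L d xf : R) :
  0 < mb -> 0 < mf -> 0 < mm -> 0 < rf -> 0 < rm -> 0 < L -> 0 < d ->
  (d - L) / 2 < xf -> xf < 0 ->
  (* (i) *)
  (mf / mm * `|d - 2 * xf| <= L ->
     (d - L) / 2 <= x01 mf mm d xf <= (d + L) / 2 /\
     characteristic mb mf mm rf rm L d xf (x01 mf mm d xf) /\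
     l1 mb mf mm rf rm L d xf (x01 mf mm d xf)
       = d / 2 + 2 * I0'' mb mf mm rf rm L / (mtot mb mf mm * d)
         + mf * (mm + mf) * (d - 2 * xf) ^+ 2 / (2 * mm * mtot mb mf mm * d)) /\
  (* (ii) *)
  (0 <= mm * d ^+ 2 + 4 * mtot mb mf mm * d * Kc mb mf mm d xf
        - 4 * mtot mb mf mm * Kc mb mf mm d xf ^+ 2
        - 4 * I0' mb mf mm rf rm L d xf ->
     characteristic mb mf mm rf rm L d xf (x02 mb mf mm rf rm L d xf) /\
     characteristic mb mf mm rf rm L d xf (x03 mb mf mm rf rm L d xf) /\
     l1 mb mf mm rf rm L d xf (x02 mb mf mm rf rm L d xf) = d /\
     l1 mb mf mm rf rm L d xf (x03 mb mf mm rf rm L d xf) = d) /\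
  (* (iii) *)
  (forall x : R, characteristic mb mf mm rf rm L d xf x ->
     x = x01 mf mm d xf \/
     (0 <= mm * d ^+ 2 + 4 * mtot mb mf mm * d * Kc mb mf mm d xf
        - 4 * mtot mb mf mm * Kc mb mf mm d xf ^+ 2
        - 4 * I0' mb mf mm rf rm L d xf /\
      (x = x02 mb mf mm rf rm L d xf \/ x = x03 mb mf mm rf rm L d xf))).
Proof.
move=> mb_gt0 mf_gt0 mm_gt0 rf_gt0 _ _ d_gt0 _ _.
have m_neq0 : mtot mb mf mm != 0 by rewrite lt0r_neq0 // /mtot; lra.
have [mm_neq0 d_neq0] := (lt0r_neq0 mm_gt0, lt0r_neq0 d_gt0).
have I0_pos x : 0 < I0 mb mf mm rf rm L d xf x by rewrite I0_gt0 ?ltW.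
rewrite characteristic_cond_disc // pmulr_rge0 //; split; [|split].
- move=> long; split; first by rewrite x01_bounds // divr_ge0 // ltW.
  by split; [apply: characteristic_x01 | apply: l1_x01].
- move=> disc_ge0.
  have char_root y := characteristic_root m_neq0 mm_neq0 (I0_pos y).
  have [x02_char l1_x02] := char_root _ (x02_root disc_ge0).
  have [x03_char l1_x03] := char_root _ (x03_root disc_ge0).
  by [].
- move=> x /(characteristic_cases m_neq0 mm_neq0)[-> | root]; [by left | right].
  have disc_ge0 : 0 <= disc mb mf mm rf rm L d xf by rewrite -root sqr_ge0.
  split=> //; move/eqP: root; rewrite sqr_2x_sub_d_eq_disc //.
  by case/orP=> /eqP; [left | right].
Qed.
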